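(* Let $F$ be a finite extension of $\mathbb{Q}_p$, $G$ a finite abelian group of odd order, and $h\in\mathrm{Hom}(\Omega_F,G)$ wildly and weakly ramified with $[F^h:F]=p$. Put $L=F^h$, let $\tau$ generate $\mathrm{Gal}(L/F)$, let $\zeta$ be a primitive $p$-th root of unity, let $\alpha'\in A^h$ with $A^h=\mathcal{O}_F\mathrm{Gal}(L/F)\cdot\alpha'$, and $y_i=\sum_{k\in\mathbb{F}_p}\tau^k(\alpha')\zeta^{-ik}$ for $i\in\mathbb F_p$. Let $n\mid p-1$ be such that the image of $\mathrm{Gal}(F(\zeta)/F)$ in $\mathbb F_p^\times$ (via $\omega(\zeta)=\zeta^i$) equals $R_n$, let $d\in\mathbb F_p$ be the class of $(p-1)/n$, and let $\widetilde\tau\in\mathrm{Gal}(L(\zeta)/F(\zeta))$ be the element restricting to $\tau$ on $L$. Then for all $j,k\in\mathbb{F}_p$, \[ \widetilde{\tau}^{j}\Big(\prod_{i\in R_n}y_i^{c(i^{-1}k)}\Big)=\zeta^{jkd}\prod_{i\in R_n}y_i^{c(i^{-1}k)}, \] and consequently, with $\alpha=\frac1p\sum_{k\in\mathbb F_p}\prod_{i\in R_n}y_i^{c(i^{-1}k)}$, for all $j\in\mathbb F_p$, \[ \tau^j(\alpha)=\frac{1}{p}\sum_{k\in\mathbb{F}_p}\Big(\zeta^{jkd}\prod_{i\in R_n}y_i^{c(i^{-1}k)}\Big). \]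
   Context: $F^h$ is the fixed field of $\ker h$ in $F^c$; wildly/weakly ramified refer to $F^h/F$ being wildly ramified / having trivial second lower ramification group. $A^h$ is the square root of the inverse different of $L/F$. Since $[L:F]=p$ and $[F(\zeta):F]$ are coprime, $\mathrm{Gal}(L(\zeta)/F)\cong\mathrm{Gal}(F(\zeta)/F)\times\mathrm{Gal}(L/F)$, so $\widetilde\tau$ is well defined, and $\alpha\in L$. $R_n=(\mathbb F_p^\times)^n$; $i^{-1}$ is the inverse in $\mathbb F_p^\times$; $c(i)$ is the unique integer in $[\frac{1-p}2,\frac{p-1}2]$ representing $i\in\mathbb F_p$; $\zeta^j$ and $\tau^j$ for $j\in\mathbb F_p$ mean powers by any integer representative. *)

From HB Require Import structures.
From mathcomp Require Import all_boot all_order all_algebra all_fingroup all_field.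
Set Implicit Arguments. Unset Strict Implicit. Unset Printing Implicit Defensive.
Import GRing.Theory.
Local Open Scope ring_scope.

(* c(i): the unique integer in [(1-p)/2, (p-1)/2] representing i in F_p
   (p odd prime; (p-1)/2 = p./2). *)
Definition cF (p : nat) (i : 'F_p) : int :=
  if (nat_of_ord i <= p./2)%N then (nat_of_ord i)%:Z
  else (nat_of_ord i)%:Z - p%:Z.

Definition Rn (p n : nat) : {set 'F_p} :=
  [set u ^+ n | u in [set x : 'F_p | x != 0]].

Definition fpow (R : ringType) (p : nat) (x : R) (j : 'F_p) : R :=
  x ^+ (nat_of_ord j).

From HB Require Import structures.
From mathcomp Require Import all_boot all_order all_algebra all_fingroup all_field.

(* The automorphism tau~ fixes zeta and shifts the orbit (tau^k alpha')_k by
   one step, so every Lagrange resolvent is an eigenvector: tau~(y_i) = zeta^i y_i.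
   Since c(i^-1 k) = i^-1 k in F_p, each factor y_i^c(i^-1 k) of the product
   over R_n picks up zeta^k, so the product picks up zeta^(k |R_n|), and
   |R_n| = (p-1)/n is d in F_p.  The formula for tau~^j(alpha) then follows by
   linearity. *)

Set Implicit Arguments.
Unset Strict Implicit.
Unset Printing Implicit Defensive.
Import GRing.Theory.
Local Open Scope ring_scope.

Section FpExponents.
Variables (R : unitRingType) (p : nat) (z : R).
Hypotheses (p_prime : prime p) (z_p : z ^+ p = 1).

Lemma fpow_natr m : fpow z (m%:R : 'F_p) = z ^+ m.
Proof. by rewrite /fpow val_Fp_nat // expr_mod. Qed.

Lemma fpowD (a b : 'F_p) : fpow z (a + b) = fpow z a * fpow z b.
Proof. by rewrite -[a]natr_Zp -[b]natr_Zp -natrD !fpow_natr exprD. Qed.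

Lemma fpowX (a : 'F_p) m : fpow z a ^+ m = fpow z (a *+ m).
Proof. by rewrite -[a]natr_Zp -mulrnA !fpow_natr exprM. Qed.

Lemma fpow_cF (a b : 'F_p) : fpow z a ^ cF b = fpow z (a * b).
Proof.
have z_unit : z \is a GRing.unit.
  by rewrite -(unitrX_pos _ (prime_gt0 p_prime)) z_p unitr1.
have a_p : fpow z a ^+ p = 1 by rewrite /fpow exprAC z_p expr1n.
rewrite -[b in RHS]natr_Zp mulr_natr -fpowX /cF; case: ifP => _; first by rewrite exprnP.
by rewrite exprzDr ?unitrX // -exprnP -invr_expz -exprnP a_p invr1 mulr1.
Qed.

End FpExponents.

Lemma expg_Fp_natr (gT : finGroupType) (p : nat) (x : gT) m :
  prime p -> (x ^+ p = 1)%g -> (x ^+ (m%:R : 'F_p))%g = (x ^+ m)%g.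
Proof. by move=> p_prime xp; rewrite val_Fp_nat // expg_mod. Qed.

Lemma Fp_fermat (p : nat) (u : 'F_p) : prime p -> u != 0 -> u ^+ p.-1 = 1.
Proof.
move=> p_prime u_neq0; apply: (mulfI u_neq0).
by rewrite -exprS prednK ?prime_gt0 // mulr1; have := expf_card u; rewrite card_Fp.
Qed.

Section PowerSubgroup.
Variables (p n : nat).
Hypotheses (p_prime : prime p) (n_dvd : (n %| p.-1)%N).

Lemma Rn_neq0 i : i \in Rn p n -> i != 0.
Proof. by case/imsetP=> u; rewrite inE => u_neq0 ->; rewrite expf_neq0. Qed.

Let n_gt0 : (0 < n)%N.
Proof.
move: n_dvd; rewrite lt0n; apply: contraTN => /eqP->.
by rewrite dvd0n -lt0n -subn1 subn_gt0 prime_gt1.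
Qed.

(* Elements of R_n are ((p-1)/n)-th roots of unity. *)
Lemma card_Rn_le : (#|Rn p n| <= p.-1 %/ n)%N.
Proof.
have m_gt0 : (0 < p.-1 %/ n)%N by rewrite divn_gt0 // dvdn_leq // -subn1 subn_gt0 prime_gt1.
rewrite cardE; apply: (max_unity_roots m_gt0 _ (enum_uniq _)).
apply/allP => w; rewrite mem_enum => /imsetP [u]; rewrite inE => u_neq0 ->.
by rewrite unity_rootE -exprM mulnC divnK // Fp_fermat.
Qed.

(* The fibres of u |-> u^n are sets of roots of X^n - w. *)
Lemma card_Rn_ge : (p.-1 <= #|Rn p n| * n)%N.
Proof.
have -> : p.-1 = #|predC1 (0 : 'F_p)| by rewrite cardC1 card_Fp.
rewrite -[#|predC1 _|]sum1_card.
rewrite (partition_big (fun u => u ^+ n) (mem (Rn p n))) /=; last first.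
  by move=> u u_neq0; apply/imsetP; exists u; rewrite ?inE.
rewrite -sum_nat_const leq_sum // => w _.
rewrite -big_filter sum1_size -ltnS -(size_XnsubC w n_gt0).
apply: max_poly_roots; first by rewrite -size_poly_eq0 size_XnsubC.
  apply/allP => u; rewrite mem_filter => /andP [/andP [_ /eqP <-] _].
  by rewrite rootE !hornerE subrr.
exact/filter_uniq/index_enum_uniq.
Qed.

Lemma card_Rn : #|Rn p n| = (p.-1 %/ n)%N.
Proof.
apply/eqP; rewrite eqn_leq card_Rn_le -(leq_pmul2r n_gt0) divnK //.
exact: card_Rn_ge.
Qed.

End PowerSubgroup.

Lemma gal_expg_eigen (F0 : fieldType) (E : splittingFieldType F0)
    (sigma : gal_of {:E}) (c x : E) m :
  sigma c = c -> sigma x = c * x -> (sigma ^+ m)%g x = c ^+ m * x.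
Proof.
move=> sigma_c sigma_x; elim: m => [|m IHm]; first by rewrite gal_id mul1r.
by rewrite expgSr galM ?memvf // IHm rmorphM rmorphXn /= sigma_c sigma_x mulrA -exprSr.
Qed.

Section LagrangeResolvent.
Variables (F0 : fieldType) (E : splittingFieldType F0) (L : {subfield E}).
Variables (p : nat) (tau : gal_of L) (zeta : E) (sigma : gal_of {:E}) (a : E).
Hypotheses (p_prime : prime p) (tau_p : (tau ^+ p)%g = 1%g) (zeta_p : zeta ^+ p = 1).
Hypotheses (sigma_zeta : sigma zeta = zeta) (sigma_tau : {in L, forall x, sigma x = tau x}).
Hypothesis aL : a \in L.

Definition lagrange_resolvent (i : 'F_p) : E :=
  \sum_(k : 'F_p) (tau ^+ k)%g a * fpow zeta (- (i * k)).

Lemma fixed_fpow (b : 'F_p) : sigma (fpow zeta b) = fpow zeta b.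
Proof. by rewrite rmorphXn /= sigma_zeta. Qed.

Lemma gal_orbit_shift m : sigma ((tau ^+ m)%g a) = (tau ^+ m.+1)%g a.
Proof. by rewrite sigma_tau ?memv_gal // expgSr galM. Qed.

Lemma lagrange_resolvent_eigen i :
  sigma (lagrange_resolvent i) = fpow zeta i * lagrange_resolvent i.
Proof.
rewrite rmorph_sum mulr_sumr [RHS](reindex_inj (addrI 1)).
apply: eq_bigr => k _.
rewrite -[k in (1 + k)%R]natr_Zp nat1r expg_Fp_natr //.
rewrite rmorphM /= gal_orbit_shift fixed_fpow mulrCA -fpowD //.
by congr (_ * fpow zeta _); rewrite -natr1 natr_Zp mulrDr mulr1 opprD addrCA subrr addr0.
Qed.

Lemma lagrange_resolvent_prod_eigen (S : {set 'F_p}) k :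
  {in S, forall i, i != 0} ->
  sigma (\prod_(i in S) lagrange_resolvent i ^ cF (i^-1 * k))
    = fpow zeta k ^+ #|S| * \prod_(i in S) lagrange_resolvent i ^ cF (i^-1 * k).
Proof.
move=> S_neq0; rewrite rmorph_prod -prodr_const -big_split /=.
apply: eq_bigr => i Si; rewrite fmorphXz /= lagrange_resolvent_eigen expfzMl.
by rewrite fpow_cF // mulrA divff ?S_neq0 // mul1r.
Qed.

End LagrangeResolvent.

Theorem proposition5p7
  (F0 : fieldType) (E : splittingFieldType F0) (p : nat)
  (p_prime : prime p) (p_odd : odd p)
  (charF : [pchar F0] =i pred0)
  (L : {subfield E}) (galL : galois 1%VS L) (dimL : \dim L = p)
  (tau : gal_of L) (tau_gen : <[tau]>%g = 'Gal(L / 1%VS)%g)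
  (zeta : E) (zeta_prim : p.-primitive_root zeta)
  (E_gen : <<L; zeta>>%VS = fullv)
  (alpha' : E) (alpha'L : alpha' \in L)
  (alpha'_free : free (mkseq (fun k => (tau ^+ k)%g alpha') p))
  (n : nat) (n_dvd : (n %| p.-1)%N)
  (imgGal : [set i : 'F_p | [exists s in 'Gal(<<1; zeta>>%VS / 1%VS)%g,
                               s zeta == zeta ^+ (nat_of_ord i)]] = Rn p n)
  (taut : gal_of {:E})
  (taut_fix : taut \in 'Gal({:E} / <<1; zeta>>%VS)%g)
  (taut_res : {in L, forall x, taut x = tau x}) :
  let d : 'F_p := ((p.-1 %/ n)%N)%:R in
  let y (i : 'F_p) : E :=
    \sum_(k : 'F_p) (tau ^+ (nat_of_ord k))%g alpha' * fpow zeta (- (i * k)) in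
  let P (k : 'F_p) : E := \prod_(i in Rn p n) y i ^ cF (i^-1 * k) in
  let alpha : E := p%:R^-1 * \sum_(k : 'F_p) P k in
  (forall j k : 'F_p,
      (taut ^+ (nat_of_ord j))%g (P k) = fpow zeta (j * k * d) * P k)
  /\ (forall j : 'F_p,
      (taut ^+ (nat_of_ord j))%g alpha
        = p%:R^-1 * \sum_(k : 'F_p) (fpow zeta (j * k * d) * P k)).
Proof.
move=> d y P alpha.
have zeta_p : zeta ^+ p = 1 := prim_expr_order zeta_prim.
have tau_p : (tau ^+ p)%g = 1%g.
  have <- : #[tau]%g = p by rewrite /order tau_gen -galois_dim // dimL dimv1 divn1.
  exact: expg_order.
have taut_zeta : taut zeta = zeta by rewrite (fixed_gal (subvf _) taut_fix) ?memv_adjoin.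
have taut_P k : taut (P k) = fpow zeta k ^+ #|Rn p n| * P k.
  exact: lagrange_resolvent_prod_eigen (@Rn_neq0 p n).
have taut_Pj (j k : 'F_p) : (taut ^+ j)%g (P k) = fpow zeta (j * k * d) * P k.
  rewrite (gal_expg_eigen _ _ (taut_P k)); last by rewrite rmorphXn /= fixed_fpow.
  rewrite -exprM fpowX // card_Rn // -mulr_natr natrM natr_Zp.
  by rewrite [j * k]mulrC -mulrA [_ * d]mulrC.
split=> // j.
rewrite rmorphM fmorphV rmorph_nat rmorph_sum; congr (_ * _).
by apply: eq_bigr => k _; rewrite /= taut_Pj.
Qed.
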